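(* Let $N\ge 2$ be an integer and let $f_1,f_2$ be non-negative integers such that the map $f:\{0,1,\ldots,N-1\}\to\{0,1,\ldots,N-1\}$, $f(x)=(f_1x+f_2x^2) \bmod N$, is a permutation of $\{0,1,\ldots,N-1\}$. Then the interleaver $f$ is maximum contention-free.
   Context: An interleaver of length $N$ is a permutation $f$ of $\{0,1,\ldots,N-1\}$; let $g=f^{-1}$ denote its inverse (the deinterleaver). For a positive integer $W$ dividing $N$, put $M=N/W$. The interleaver $f$ is called contention-free for window size $W$ if for both $\pi=f$ and $\pi=g$ we have $\lfloor \pi(j+tW)/W\rfloor \neq \lfloor \pi(j+vW)/W\rfloor$ for all integers $j,t,v$ with $0\le j<W$ and $0\le t<v<M$. The interleaver is called maximum contention-free if it is contention-free for every window size $W$ that is a positive divisor of $N$. Here $a \bmod N$ denotes the representative of $a$ modulo $N$ in $\{0,\ldots,N-1\}$. *)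

From mathcomp Require Import all_boot.
Set Implicit Arguments. Unset Strict Implicit. Unset Printing Implicit Defensive.

Definition is_perm_on (N : nat) (f : nat -> nat) : Prop :=
  (forall x, x < N -> f x < N) /\
  (forall x y, x < N -> y < N -> f x = f y -> x = y).

Definition is_inverse_on (N : nat) (f g : nat -> nat) : Prop :=
  (forall x, x < N -> g x < N) /\
  (forall x, x < N -> g (f x) = x) /\
  (forall x, x < N -> f (g x) = x).

Definition cf_cond (N W : nat) (pi : nat -> nat) : Prop :=
  forall j t v, j < W -> t < v -> v < N %/ W ->
    pi (j + t * W) %/ W <> pi (j + v * W) %/ W.

Definition contention_free (N W : nat) (f : nat -> nat) : Prop :=
  forall g, is_inverse_on N f g -> cf_cond N W f /\ cf_cond N W g.

Definition max_contention_free (N : nat) (f : nat -> nat) : Prop :=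
  forall W, 0 < W -> W %| N -> contention_free N W f.

Definition qpp (N f1 f2 : nat) (x : nat) : nat := (f1 * x + f2 * x ^ 2) %% N.

From mathcomp Require Import all_boot.

(* For W dividing N, a polynomial map modulo N sends residue classes modulo W
   into residue classes modulo W.  Consequently the window positions
   j, j + W, j + 2W, ... all land in one residue class modulo W, so their
   images, being distinct, have distinct quotients by W.  Since f is onto,
   the map it induces on Z/W is onto, hence bijective, and so the inverse
   permutation also preserves residue classes modulo W: the same argument
   applies to it. *)

Definition injective_on (N : nat) (pi : nat -> nat) : Prop :=
  forall x y, x < N -> y < N -> pi x = pi y -> x = y.

Definition respects_mod (N W : nat) (pi : nat -> nat) : Prop :=
  forall x y, x < N -> y < N -> x = y %[mod W] -> pi x = pi y %[mod W].

Lemma surj_injective (T : finType) (h : T -> T) :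
  (forall y, exists x, h x = y) -> injective h.
Proof.
move=> h_onto; have /image_injP h_inj : #|[seq h x | x in T]| == #|T|.
  apply/eqP/eq_card => y.
  by have [x <-] := h_onto y; rewrite image_f.
by move=> x y; apply: h_inj.
Qed.

Lemma divn_eqmod_inj (W a b : nat) : a = b %[mod W] -> a %/ W = b %/ W -> a = b.
Proof. by move=> eq_mod eq_div; rewrite (divn_eq a W) (divn_eq b W) eq_mod eq_div. Qed.

Lemma inverse_on_injective (N : nat) (f g : nat -> nat) :
  is_inverse_on N f g -> injective_on N g.
Proof. by move=> [_ [_ fK]] x y x_lt y_lt /(congr1 f); rewrite !fK. Qed.

Lemma qpp_eqmod (N f1 f2 W x y : nat) : W %| N ->
  x = y %[mod W] -> qpp N f1 f2 x = qpp N f1 f2 y %[mod W].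
Proof.
move=> W_dvdN xy; rewrite /qpp !modn_dvdm //.
by rewrite -modnDm -modnMmr -(modnMmr f2) -modnXm xy modnXm modnMmr
  (modnMmr f2) modnDm.
Qed.

Section ResidueClasses.

Variables (N W : nat).
Hypotheses (W_gt0 : 0 < W) (W_dvdN : W %| N).

Lemma window_lt (j t : nat) : j < W -> t < N %/ W -> j + t * W < N.
Proof.
move=> j_lt t_lt; rewrite -(divnK W_dvdN).
by apply: leq_trans (leq_mul t_lt (leqnn W)); rewrite mulSn ltn_add2r.
Qed.

Lemma cf_cond_of_respects_mod (pi : nat -> nat) :
  injective_on N pi -> respects_mod N W pi -> cf_cond N W pi.
Proof.
move=> pi_inj pi_mod j t v j_lt t_lt_v v_lt eq_div.
have t_lt : t < N %/ W by apply: ltn_trans v_lt.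
have eq_mod : j + t * W = j + v * W %[mod W] by rewrite ![j + _]addnC !modnMDl.
have tW_lt := window_lt _ _ j_lt t_lt; have vW_lt := window_lt _ _ j_lt v_lt.
have /addnI/eqP : j + t * W = j + v * W.
  by apply: pi_inj => //; apply: divn_eqmod_inj eq_div; apply: pi_mod.
rewrite eqn_pmul2r // => /eqP t_eq_v.
by rewrite t_eq_v ltnn in t_lt_v.
Qed.

Lemma inverse_respects_mod (f g : nat -> nat) :
  is_inverse_on N f g -> respects_mod N W f -> respects_mod N W g.
Proof.
move=> [g_lt [_ fK]] f_mod x y x_lt y_lt xy.
have W_le : W <= N by apply: dvdn_leq; first exact: leq_ltn_trans x_lt.
have mod_lt a : a %% W < N by apply: leq_trans W_le; rewrite ltn_pmod.
have f_modW a : a < N -> f a = f (a %% W) %[mod W].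
  by move=> a_lt; apply: f_mod; rewrite ?modn_mod.
pose r (i : 'I_W) : 'I_W := Ordinal (ltn_pmod (f i) W_gt0).
have r_inj : injective r.
  apply: surj_injective => s.
  have s_lt : s < N by apply: leq_trans W_le.
  exists (Ordinal (ltn_pmod (g s) W_gt0)); apply: val_inj => /=.
  by rewrite -f_modW ?g_lt // fK // modn_small.
have : r (Ordinal (ltn_pmod (g x) W_gt0)) = r (Ordinal (ltn_pmod (g y) W_gt0)).
  by apply: val_inj => /=; rewrite -!f_modW ?g_lt // !fK.
by move/r_inj/(congr1 val).
Qed.

End ResidueClasses.

Theorem theorem1 (N f1 f2 : nat) :
  2 <= N -> is_perm_on N (qpp N f1 f2) ->
  max_contention_free N (qpp N f1 f2).
Proof.
move=> _ [_ f_inj] W W_gt0 W_dvdN g fg_inv.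
have f_mod : respects_mod N W (qpp N f1 f2).
  by move=> x y _ _; apply: qpp_eqmod.
split; apply: cf_cond_of_respects_mod => //.
- exact: inverse_on_injective fg_inv.
- exact: inverse_respects_mod fg_inv f_mod.
Qed.
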